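(* Let $f$ be a periodic traveling wave of speed $c$ with $c\neq 0$ and $c^2\neq1$. If $\lambda\in\sigma(\mathrm{P})$ and $\operatorname{Re}\lambda\neq 0$, then exactly one of the two Floquet multipliers of (P) lies on the unit circle.
   Context: A traveling wave of speed $c$ is a real solution $f$ of $(c^2-1)f''+\sin f=0$, with energy $E$ given by $\tfrac12(c^2-1)(f')^2+1-\cos f=E$; periodic traveling waves are librational ($0<E<2$) or rotational ($E<0$ if $c^2<1$, $E>2$ if $c^2>1$), with fundamental period $T$ (smallest $T>0$ with $f(z+T)=f(z)\pmod{2\pi}$). Let $\gamma=1/(c^2-1)$. Equation (P): $p''-2c\gamma\lambda p'+\gamma(\lambda^2+\cos f(z))p=0$, written as a first-order system for $(p,p')$; its monodromy matrix is $F(T;\lambda)$ where $F$ is the fundamental matrix with $F(0;\lambda)=I$, and its Floquet multipliers are the eigenvalues of the monodromy matrix. $\sigma(\mathrm{P})$ is the set of $\lambda\in\mathbb{C}$ for which (P) has a nontrivial solution bounded on $\mathbb{R}$. *)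

From HB Require Import structures.
From mathcomp Require Import all_boot all_order all_algebra.
From mathcomp Require Import all_classical all_reals all_analysis.
From mathcomp Require Import complex.
Set Implicit Arguments. Unset Strict Implicit. Unset Printing Implicit Defensive.
Import Order.TTheory GRing.Theory Num.Theory.
Local Open Scope ring_scope.
Local Open Scope complex_scope.

Section TW.
Variable R : realType.

Definition gam (c : R) : R := (c ^+ 2 - 1)^-1.

Definition traveling_wave (c : R) (f : R -> R) : Prop :=
  forall z : R, derivable f z 1 /\ derivable (derive1 f) z 1 /\
    (c ^+ 2 - 1) * derive1 (derive1 f) z + sin (f z) = 0.

Definition energy (c : R) (f : R -> R) (z : R) : R :=
  2^-1 * (c ^+ 2 - 1) * (derive1 f z) ^+ 2 + 1 - cos (f z).

Definition period_mod2pi (f : R -> R) (S : R) : Prop :=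
  forall z : R, exists k : int, f (z + S) = f z + k%:~R * (2 * pi).

Definition fundamental_period (f : R -> R) (T : R) : Prop :=
  0 < T /\ period_mod2pi f T /\
  forall S : R, 0 < S -> S < T -> ~ period_mod2pi f S.

(* f is a periodic traveling wave of speed c, energy E, fundamental period T:
   librational (0<E<2) or rotational (E<0 if c^2<1, E>2 if c^2>1). *)
Definition periodic_traveling_wave (c : R) (f : R -> R) (E T : R) : Prop :=
  traveling_wave c f /\ (forall z, energy c f z = E) /\
  ((0 < E /\ E < 2) \/ (c ^+ 2 < 1 /\ E < 0) \/ (1 < c ^+ 2 /\ 2 < E)) /\
  fundamental_period f T.

Definition Cderiv (p q : R -> R[i]) : Prop :=
  forall z : R, is_derive z 1 (fun t => complex.Re (p t)) (complex.Re (q z)) /\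
                is_derive z 1 (fun t => complex.Im (p t)) (complex.Im (q z)).

Definition solves_P (c : R) (f : R -> R) (lam : R[i]) (p : R -> R[i]) : Prop :=
  exists p1 p2 : R -> R[i], Cderiv p p1 /\ Cderiv p1 p2 /\
    forall z : R, p2 z - (2 * c * gam c)%:C * lam * p1 z
                  + (gam c)%:C * (lam ^+ 2 + (cos (f z))%:C) * p z = 0.

Definition in_sigmaP (c : R) (f : R -> R) (lam : R[i]) : Prop :=
  exists p : R -> R[i], solves_P c f lam p /\ (exists z, p z != 0) /\
    exists M : R, forall z, `|p z| <= M%:C.

(* coefficient matrix of (P) written as a first order system for (p, p') *)
Definition Pmat (c : R) (f : R -> R) (lam : R[i]) (z : R) : 'M[R[i]]_2 :=
  \matrix_(i < 2, j < 2)
    if i == 0 :> nat then (if j == 0 :> nat then 0 else 1)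
    else (if j == 0 :> nat then - ((gam c)%:C * (lam ^+ 2 + (cos (f z))%:C))
          else (2 * c * gam c)%:C * lam).

Definition mxCderiv (F G : R -> 'M[R[i]]_2) : Prop :=
  forall i j : 'I_2, Cderiv (fun z => F z i j) (fun z => G z i j).

Definition fundamental_matrix (c : R) (f : R -> R) (lam : R[i])
    (F : R -> 'M[R[i]]_2) : Prop :=
  F 0 = 1%:M /\ mxCderiv F (fun z => Pmat c f lam z *m F z).

End TW.

From mathcomp Require Import all_boot all_order all_algebra.
From mathcomp Require Import all_classical all_reals all_analysis.
From mathcomp Require Import complex.
From mathcomp Require Import ring.
Import Order.TTheory GRing.Theory Num.Theory Normc numFieldNormedType.Exports.
Local Open Scope ring_scope.
Local Open Scope complex_scope.
Set Implicit Arguments. Unset Strict Implicit. Unset Printing Implicit Defensive.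

(* Written as a first-order system, (P) has trace 2cγλ, so by Liouville's formula
   det F(T) = μ1 μ2 has modulus exp(2cγ Re λ T) ≠ 1: the multipliers are not both on
   the unit circle.  If neither were, the samples p(z0 + kT) of a bounded solution
   would form a bounded two-sided sequence satisfying the linear recurrence whose
   characteristic roots are μ1, μ2 (Floquet's theorem and Cayley–Hamilton); such a
   sequence vanishes identically, contradicting p(z0) ≠ 0. *)

Lemma periodicz (U : zmodType) (V : zmodType) (f : U -> V) (T : U) :
  periodic f T -> forall (k : int) (u : U), f (u + T *~ k) = f u.
Proof.
move=> fT [] n u; first exact: periodicn.
by rewrite NegzE mulrNz -[in RHS](subrK (T *+ n.+1) u) periodicn.
Qed.

Section ComplexDerivative.
Variable R : realType.
Implicit Types (p q : R -> R[i]) (x y : R[i]).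

Lemma Re_add x y : complex.Re (x + y) = complex.Re x + complex.Re y.
Proof. by case: x y => [a b] [c d]. Qed.
Lemma Im_add x y : complex.Im (x + y) = complex.Im x + complex.Im y.
Proof. by case: x y => [a b] [c d]. Qed.
Lemma Re_sub x y : complex.Re (x - y) = complex.Re x - complex.Re y.
Proof. by case: x y => [a b] [c d]. Qed.
Lemma Im_sub x y : complex.Im (x - y) = complex.Im x - complex.Im y.
Proof. by case: x y => [a b] [c d]. Qed.
Lemma Re_mul x y :
  complex.Re (x * y) = complex.Re x * complex.Re y - complex.Im x * complex.Im y.
Proof. by case: x y => [a b] [c d]. Qed.
Lemma Im_mul x y :
  complex.Im (x * y) = complex.Re x * complex.Im y + complex.Im x * complex.Re y.
Proof. by case: x y => [a b] [c d]. Qed.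

Lemma is_derive_ext (f g : R -> R) (z d : R) :
  f =1 g -> is_derive z 1 g d -> is_derive z 1 f d.
Proof. by move=> /funext ->. Qed.

Lemma Cderiv_eq p q1 q2 : Cderiv p q1 -> q1 =1 q2 -> Cderiv p q2.
Proof. by move=> dp e z; rewrite -e. Qed.

Lemma Cderiv_cst x : Cderiv (fun=> x) (fun=> 0).
Proof. by move=> z; split; exact: is_derive_cst. Qed.

Lemma CderivD p p' q q' : Cderiv p p' -> Cderiv q q' ->
  Cderiv (fun z => p z + q z) (fun z => p' z + q' z).
Proof.
move=> dp dq z; have [dpr dpi] := dp z; have [dqr dqi] := dq z; split.
- apply: (is_derive_ext (fun t => Re_add (p t) (q t))).
  by rewrite Re_add; exact: is_deriveD.
- apply: (is_derive_ext (fun t => Im_add (p t) (q t))).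
  by rewrite Im_add; exact: is_deriveD.
Qed.

Lemma CderivM p p' q q' : Cderiv p p' -> Cderiv q q' ->
  Cderiv (fun z => p z * q z) (fun z => p' z * q z + p z * q' z).
Proof.
move=> dp dq z; have [dpr dpi] := dp z; have [dqr dqi] := dq z; split.
- apply: (is_derive_ext (fun t => Re_mul (p t) (q t))).
  apply: is_derive_eq (is_deriveB (is_deriveM dpr dqr) (is_deriveM dpi dqi)) _.
  by rewrite Re_add !Re_mul /GRing.scale /=; ring.
- apply: (is_derive_ext (fun t => Im_mul (p t) (q t))).
  apply: is_derive_eq (is_deriveD (is_deriveM dpr dqi) (is_deriveM dpi dqr)) _.
  by rewrite Im_add !Im_mul /GRing.scale /=; ring.
Qed.

Lemma CderivB p p' q q' : Cderiv p p' -> Cderiv q q' ->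
  Cderiv (fun z => p z - q z) (fun z => p' z - q' z).
Proof.
move=> dp dq z; have [dpr dpi] := dp z; have [dqr dqi] := dq z; split.
- apply: (is_derive_ext (fun t => Re_sub (p t) (q t))).
  by rewrite Re_sub; exact: is_deriveB.
- apply: (is_derive_ext (fun t => Im_sub (p t) (q t))).
  by rewrite Im_sub; exact: is_deriveB.
Qed.

Lemma Cderiv_shift p q a :
  Cderiv p q -> Cderiv (fun z => p (z + a)) (fun z => q (z + a)).
Proof.
move=> dp z; have [dpr dpi] := dp (z + a).
by split; apply: is_derive_eq (is_derive1_comp _ (is_derive_shift z 1 a)) (mulr1 _).
Qed.

Lemma is_derive_expRM (k z : R) :
  is_derive z 1 (fun t => expR (k * t)) (k * expR (k * z)).
Proof.
have dkz := is_deriveZ k (is_derive_id z 1).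
apply: is_derive_eq (is_derive1_comp (is_derive_expR (k * z)) dkz) _.
by rewrite /GRing.scale /= mulr1 mulrC.
Qed.

Lemma normc_sqr x : normc x ^+ 2 = complex.Re x ^+ 2 + complex.Im x ^+ 2.
Proof. by case: x => a b /=; rewrite sqr_sqrtr // addr_ge0 ?sqr_ge0. Qed.

Lemma normr_normc x : `|x| = (normc x)%:C.
Proof. by case: x. Qed.

Lemma normc_ge0 x : 0 <= normc x.
Proof. by case: x => a b /=; exact: sqrtr_ge0. Qed.

Lemma normc_linear_sol p r : Cderiv p (fun z => r * p z) ->
  forall z, normc (p z) = normc (p 0) * expR (complex.Re r * z).
Proof.
move=> dp z; set a := complex.Re r.
(* |p|^2 exp(-2 a t) has zero derivative. *)
pose N t := complex.Re (p t) ^+ 2 + complex.Im (p t) ^+ 2.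
have dN (t : R) : is_derive t 1 (fun t => N t * expR (- (2 * a) * t)) 0.
  have [dpr dpi] := dp t.
  apply: is_derive_eq (is_deriveM (is_deriveD (is_deriveX 2 dpr) (is_deriveX 2 dpi))
                                  (is_derive_expRM _ t)) _.
  by rewrite !fctE /GRing.scale /= /N /a Re_mul Im_mul; ring.
have := is_derive_0_is_cst z 0 dN; rewrite mulr0 expR0 mulr1 /N -!normc_sqr => Nz.
apply/eqP; rewrite -(eqrXn2 (_ : 0 < 2)%N) ?mulr_ge0 ?expR_ge0 ?normc_ge0 //.
rewrite exprMn -expRM_natr -Nz mulNr -mulrA -expRD.
by rewrite -[2 * a * z]mulrA [a * z * 2]mulrC addNr expR0 mulr1.
Qed.

Lemma Cderiv_scalar_uniq (r : R[i]) (w1 w2 : R -> R[i]) :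
  Cderiv w1 (fun z => r * w1 z) -> Cderiv w2 (fun z => r * w2 z) ->
  w1 0 = w2 0 -> forall z, w1 z = w2 z.
Proof.
move=> dw1 dw2 w12 z; apply/eqP; rewrite -subr_eq0; apply/eqP/eq0_normc.
have dw : Cderiv (fun z => w1 z - w2 z) (fun z => r * (w1 z - w2 z)).
  by apply: Cderiv_eq (CderivB dw1 dw2) _ => t; rewrite mulrBr.
by rewrite (normc_linear_sol dw) w12 subrr normc0 mul0r.
Qed.

End ComplexDerivative.

Section SecondOrderSystem.
Variables (R : realType) (Q : R -> R[i]) (r : R[i]).

Definition sys_sol (v : R -> R[i] * R[i]) : Prop :=
  Cderiv (fun z => (v z).1) (fun z => (v z).2) /\
  Cderiv (fun z => (v z).2) (fun z => r * (v z).2 - Q z * (v z).1).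

Definition wronskian (u v : R -> R[i] * R[i]) (z : R) : R[i] :=
  (u z).1 * (v z).2 - (v z).1 * (u z).2.

Lemma Cderiv_wronskian u v : sys_sol u -> sys_sol v ->
  Cderiv (wronskian u v) (fun z => r * wronskian u v z).
Proof.
move=> [du1 du2] [dv1 dv2].
apply: Cderiv_eq (CderivB (CderivM du1 dv2) (CderivM dv1 du2)) _ => z.
by rewrite /wronskian; ring.
Qed.

Lemma sys_sol_shift v s : periodic Q s -> sys_sol v -> sys_sol (fun z => v (z + s)).
Proof.
move=> Qs [dv1 dv2]; split; first exact: Cderiv_shift s dv1.
by apply: Cderiv_eq (Cderiv_shift s dv2) _ => z; rewrite Qs.
Qed.

Variables (a b : R -> R[i] * R[i]).
Hypotheses (a_sol : sys_sol a) (b_sol : sys_sol b) (a0 : a 0 = (1, 0)) (b0 : b 0 = (0, 1)).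

Definition fund_sol (x : R[i] * R[i]) (z : R) : R[i] * R[i] :=
  (x.1 * (a z).1 + x.2 * (b z).1, x.1 * (a z).2 + x.2 * (b z).2).

Lemma wronskian_fund0 : wronskian a b 0 = 1.
Proof. by rewrite /wronskian a0 b0 mulr1 mulr0 subr0. Qed.

Lemma normc_wronskian_fund z : normc (wronskian a b z) = expR (complex.Re r * z).
Proof.
rewrite (normc_linear_sol (Cderiv_wronskian a_sol b_sol)).
by rewrite wronskian_fund0 normc1 mul1r.
Qed.

Lemma normc_wronskian_fund_eq1 z :
  (normc (wronskian a b z) == 1) = (complex.Re r * z == 0).
Proof. by rewrite normc_wronskian_fund -expR0 (inj_eq (@expR_inj R)). Qed.

Lemma wronskian_fundE u v : sys_sol u -> sys_sol v ->
  forall z, wronskian u v z = wronskian u v 0 * wronskian a b z.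
Proof.
move=> u_sol v_sol; apply: Cderiv_scalar_uniq; first exact: Cderiv_wronskian.
- apply: Cderiv_eq (CderivM (Cderiv_cst _) (Cderiv_wronskian a_sol b_sol)) _ => z.
  by rewrite mul0r add0r mulrCA.
- by rewrite wronskian_fund0 mulr1.
Qed.

Lemma sys_sol_decomp v : sys_sol v -> forall z, v z = fund_sol (v 0) z.
Proof.
move=> v_sol z.
have W_neq0 : wronskian a b z != 0.
  apply: contraTneq (expR_gt0 (complex.Re r * z)) => W0.
  by rewrite -normc_wronskian_fund W0 normc0 ltxx.
have Wvb : wronskian v b z = (v 0).1 * wronskian a b z.
  rewrite (wronskian_fundE v_sol b_sol) [wronskian v b 0]/wronskian.
  by rewrite b0 mulr1 mul0r subr0.
have Wav : wronskian a v z = (v 0).2 * wronskian a b z.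
  rewrite (wronskian_fundE a_sol v_sol) [wronskian a v 0]/wronskian.
  by rewrite a0 mul1r mulr0 subr0.
rewrite [v z]surjective_pairing /fund_sol; congr pair; apply: (mulfI W_neq0).
- transitivity (wronskian v b z * (a z).1 + wronskian a v z * (b z).1).
    by rewrite /wronskian; ring.
  by rewrite Wvb Wav; ring.
- transitivity (wronskian v b z * (a z).2 + wronskian a v z * (b z).2).
    by rewrite /wronskian; ring.
  by rewrite Wvb Wav; ring.
Qed.

(* (a T, b T) are the columns of the monodromy matrix; the recurrence is its
   Cayley–Hamilton identity. *)
Lemma floquet_recurrence T v z0 : periodic Q T -> sys_sol v -> forall k : int,
  (v (z0 + T *~ (k + 2))).1 =
    ((a T).1 + (b T).2) * (v (z0 + T *~ (k + 1))).1
    - wronskian a b T * (v (z0 + T *~ k)).1.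
Proof.
move=> QT v_sol k.
have shift j z : v (z + T *~ j) = fund_sol (v (T *~ j)) z.
  by rewrite (sys_sol_decomp (sys_sol_shift (periodicz QT j) v_sol)) add0r.
have step j : v (T *~ (j + 1)) = fund_sol (v (T *~ j)) T.
  by rewrite mulrzDr mulr1z addrC shift.
have -> : k + 2 = k + 1 + 1 by rewrite -addrA.
by rewrite !shift !step /fund_sol /wronskian /=; ring.
Qed.

End SecondOrderSystem.

Section BoundedRecurrences.
Variable R : realType.

Lemma le0_geometric_bound (x y B : R) :
  `|y| < 1 -> (forall n, x <= y ^+ n * B) -> x <= 0.
Proof.
move=> y_lt1 xB.
have := cvgMr_tmp (b := B) (cvg_expr y_lt1); rewrite mul0r => /(_ _) yB.
apply: (ler_cvg_to _ yB); first exact: cvg_cst.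
exact: nearW.
Qed.

Lemma normcX (x : R[i]) n : normc (x ^+ n) = normc x ^+ n.
Proof. by elim: n => [|n IH]; rewrite ?normc1 // !exprS normcM IH. Qed.

Lemma bounded_geometric_eq0 (t : int -> R[i]) (mu : R[i]) (B : R) :
  (forall k, t (k + 1) = mu * t k) -> (forall k, normc (t k) <= B) ->
  normc mu != 1 -> forall k, t k = 0.
Proof.
move=> t_step t_bnd mu_neq1 k.
apply: eq0_normc; apply/eqP; rewrite eq_le normc_ge0 andbT.
have t_pow j (n : nat) : t (j + n%:Z) = mu ^+ n * t j.
  elim: n => [|n IH]; first by rewrite addr0 expr0 mul1r.
  by rewrite -addn1 PoszD addrA t_step IH addn1 exprS mulrA.
case: (ltgtP (normc mu) 1) mu_neq1 => // [mu_lt1 | mu_gt1] _.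
- apply: (@le0_geometric_bound _ (normc mu) B); first by rewrite ger0_norm ?normc_ge0.
  move=> n; rewrite -[k](subrK n%:Z) t_pow normcM normcX.
  by rewrite ler_wpM2l ?exprn_ge0 ?normc_ge0.
- have mu_gt0 : 0 < normc mu by exact: lt_trans mu_gt1.
  apply: (@le0_geometric_bound _ (normc mu)^-1 B).
    by rewrite ger0_norm ?invr_ge0 ?normc_ge0 // invf_lt1.
  move=> n; rewrite exprVn ler_pdivlMl ?exprn_gt0 // -normcX -normcM -t_pow.
  exact: t_bnd.
Qed.

Lemma bounded_rec2_eq0 (s : int -> R[i]) (mu1 mu2 : R[i]) (B : R) :
  (forall k, s (k + 2) = (mu1 + mu2) * s (k + 1) - mu1 * mu2 * s k) ->
  (forall k, normc (s k) <= B) -> normc mu1 != 1 -> normc mu2 != 1 ->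
  forall k, s k = 0.
Proof.
move=> s_rec s_bnd mu1_neq1 mu2_neq1.
pose t k := s (k + 1) - mu2 * s k.
have t_step k : t (k + 1) = mu1 * t k by rewrite /t -addrA s_rec; ring.
have t_bnd k : normc (t k) <= B + normc mu2 * B.
  apply: le_trans (le_normcD _ _) _; rewrite normcN normcM.
  by apply: lerD => //; apply: ler_wpM2l; [exact: normc_ge0 | exact: s_bnd].
have t0 := bounded_geometric_eq0 t_step t_bnd mu1_neq1.
apply: bounded_geometric_eq0 _ s_bnd mu2_neq1 => k.
by apply/eqP; rewrite -subr_eq0; apply/eqP; exact: t0.
Qed.
End BoundedRecurrences.

Lemma char_poly_mx2 (K : comNzRingType) (A : 'M[K]_2) :
  char_poly A = 'X^2 - (A 0 0 + A 1 1)%:P * 'X + (A 0 0 * A 1 1 - A 0 1 * A 1 0)%:P.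
Proof.
rewrite /char_poly (expand_det_row _ 0) !big_ord_recl big_ord0 /cofactor !det_mx11.
rewrite /char_poly_mx !mxE /=.
rewrite (_ : lift 0 0 = 1 :> 'I_2); last exact/val_inj.
rewrite (_ : lift 1 0 = 0 :> 'I_2); last exact/val_inj.
rewrite !expr0 !mul1r expr1 !mulr1n !mulr0n !sub0r addr0 !polyCD !polyCM !polyCN.
ring.
Qed.

Lemma roots_of_sum_prod (K : numClosedFieldType) (s d : K) :
  exists mu1 mu2 : K, mu1 + mu2 = s /\ mu1 * mu2 = d.
Proof.
pose D := sqrtC (s ^+ 2 - 4 * d).
have two_neq0 : (2 : K) != 0 by rewrite pnatr_eq0.
exists ((s + D) / 2), ((s - D) / 2); split; first by field.
transitivity ((s ^+ 2 - D ^+ 2) / 4); first by field.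
by rewrite sqrtCK; field.
Qed.

Section EquationP.
Variables (R : realType) (c : R) (f : R -> R) (lam : R[i]).

Definition Pcoef (z : R) : R[i] := (gam c)%:C * (lam ^+ 2 + (cos (f z))%:C).
Definition Pdrift : R[i] := (2 * c * gam c)%:C * lam.

Lemma Pcoef_periodic T : period_mod2pi f T -> periodic Pcoef T.
Proof.
move=> fT z; rewrite /Pcoef; have [k ->] := fT z.
by rewrite mulrzl mulr_natl (periodicz (@cosD2pi R)).
Qed.

Lemma Re_Pdrift : complex.Re Pdrift = 2 * c * gam c * complex.Re lam.
Proof. by rewrite /Pdrift Re_mul /= mul0r subr0. Qed.

Lemma solves_P_sys_sol p : solves_P c f lam p ->
  exists v, sys_sol Pcoef Pdrift v /\ forall z, (v z).1 = p z.
Proof.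
move=> [p1 [p2 [dp [dp1 Peq]]]]; exists (fun z => (p z, p1 z)); split; last by [].
split; first exact: dp.
apply: Cderiv_eq dp1 _ => z /=.
by rewrite -[p2 z]subr0 -(Peq z) /Pdrift /Pcoef; ring.
Qed.

Lemma Pmat_mulmx z (G : 'M[R[i]]_2) j :
  (Pmat c f lam z *m G) 0 j = G 1 j /\
  (Pmat c f lam z *m G) 1 j = Pdrift * G 1 j - Pcoef z * G 0 j.
Proof.
rewrite !mxE !big_ord_recl !big_ord0 !mxE /=.
rewrite (_ : lift ord0 ord0 = 1 :> 'I_2); last exact/val_inj.
by rewrite /Pdrift /Pcoef; split; ring.
Qed.

Lemma fundamental_matrix_col F j : fundamental_matrix c f lam F ->
  sys_sol Pcoef Pdrift (fun z => (F z 0 j, F z 1 j)).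
Proof.
move=> [_ dF]; split; apply: Cderiv_eq (dF _ j) _ => z /=.
- by have [-> _] := Pmat_mulmx z (F z) j.
- by have [_ ->] := Pmat_mulmx z (F z) j.
Qed.

End EquationP.

Theorem lemma3p4 (R : realType) (c : R) (f : R -> R) (E T : R) :
  c != 0 -> c ^+ 2 != 1 ->
  periodic_traveling_wave c f E T ->
  forall lam : R[i], in_sigmaP c f lam -> complex.Re lam != 0 ->
  forall F : R -> 'M[R[i]]_2, fundamental_matrix c f lam F ->
  exists mu1 mu2 : R[i],
    char_poly (F T) = ('X - mu1%:P) * ('X - mu2%:P) /\
    ((`|mu1| = 1 /\ `|mu2| <> 1) \/ (`|mu1| <> 1 /\ `|mu2| = 1)).
Proof.
move=> c_neq0 c2_neq1 [_ [_ [_ [T_gt0 [f_per _]]]]] lam [p [p_sol [[z0 pz0] [M p_bnd]]]].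
move=> Re_lam F F_fund.
pose a z := (F z 0 0, F z 1 0); pose b z := (F z 0 1, F z 1 1).
have a_sol := fundamental_matrix_col 0 F_fund.
have b_sol := fundamental_matrix_col 1 F_fund.
have a0 : a 0 = (1, 0) by rewrite /a F_fund.1 !mxE.
have b0 : b 0 = (0, 1) by rewrite /b F_fund.1 !mxE.
have [mu1 [mu2 [mu_sum mu_prod]]] := roots_of_sum_prod ((a T).1 + (b T).2) (wronskian a b T).
exists mu1, mu2; split.
  rewrite char_poly_mx2 (_ : F T 0 0 + F T 1 1 = mu1 + mu2) //.
  by rewrite (_ : _ * _ - _ * _ = mu1 * mu2) // polyCD polyCM; ring.
have mu_prod_neq1 : normc (mu1 * mu2) != 1.
  rewrite mu_prod (normc_wronskian_fund_eq1 a_sol b_sol a0 b0) Re_Pdrift /gam.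
  by rewrite !mulf_neq0 ?pnatr_eq0 ?invr_eq0 ?subr_eq0 ?(gt_eqF T_gt0).
rewrite !normr_normc.
have [m1|m1] := eqVneq (normc mu1) 1; have [m2|m2] := eqVneq (normc mu2) 1.
- by move: mu_prod_neq1; rewrite normcM m1 m2 mulr1 eqxx.
- by left; rewrite m1; split=> // -[] /eqP; rewrite (negbTE m2).
- by right; rewrite m2; split=> // -[] /eqP; rewrite (negbTE m1).
have [v [v_sol v_p]] := solves_P_sys_sol p_sol.
have := floquet_recurrence a_sol b_sol a0 b0 z0 (Pcoef_periodic c lam f_per) v_sol.
rewrite -mu_sum -mu_prod => s_rec.
have s_bnd k : normc (v (z0 + T *~ k)).1 <= M by rewrite v_p -lecR -normr_normc.
have := bounded_rec2_eq0 s_rec s_bnd m1 m2 0.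
by rewrite mulr0z addr0 v_p => pz0_eq0; rewrite pz0_eq0 eqxx in pz0.
Qed.
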